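(* Let $\Omega\subseteq\mathsf X$ be open, $p\in[1,\infty)$, and $\rho_\bullet=(\rho_\delta)_{\delta\in(0,1)}\subseteq\mathfrak M_+(\mathsf X\times\mathsf X)$. Suppose there is a family $(\varrho^+_\delta)_{\delta\in(0,1)}$ of Lebesgue measurable functions $(0,\infty)\to[0,+\infty]$ such that: (i) $\lim_{r\searrow0}\limsup_{\delta\searrow0}\int_{(r,+\infty)}\frac{\varrho^+_\delta(t)}{t^{p+1}}\,\mathrm dt=0$; (ii) for every $\delta\in(0,1)$, $\rho_\delta(x,x')\le\frac{\varrho^+_\delta(\mathsf d(x,x'))}{\mathfrak m(\mathrm B(x,4\mathsf d(x,x')))}$ for $(\mathfrak m\otimes\mathfrak m)$-a.e. $(x,x')\in\Omega\times\Omega$ with $x\ne x'$; (iii) there is $\bar r>0$ such that for every $\delta\in(0,1)$ and every $k\in\mathbb Z$, $\varrho^+_\delta$ is constant on $(2^k\bar r,2^{k+1}\bar r]$. Then $\rho_\bullet$ satisfies the $p$-decay condition for $\Omega$, i.e. \[ \lim_{r\searrow0}\limsup_{\delta\searrow0}\operatorname*{ess\,sup}_{x\in\Omega}\int_{\Omega\cap\{x':\mathsf d(x,x')>r\}}\frac{\rho_\delta(x,x')+\rho_\delta(x',x)}{\mathsf d(x,x')^p}\,\mathrm d\mathfrak m(x')=0. \]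
   Context: $(\mathsf X,\mathsf d)$ is a locally complete separable metric space of positive diameter with a locally finite Borel outer measure $\mathfrak m$, $\mathfrak m(\mathsf X)>0$. Conventions $0\cdot(+\infty)=0/0=0$. Closed balls $\mathrm B(x,r)=\{x':\mathsf d(x,x')\le r\}$. Essential sup w.r.t. $\mathfrak m$. $\mathfrak M_+(\mathsf X\times\mathsf X)$: $(\mathfrak m\otimes\mathfrak m)$-measurable functions into $[0,+\infty]$. *)

From HB Require Import structures.
From mathcomp Require Import all_boot all_order all_algebra.
From mathcomp Require Import all_classical all_reals all_analysis.
From mathcomp Require Import measurable_realfun ess_sup_inf.
Set Implicit Arguments. Unset Strict Implicit. Unset Printing Implicit Defensive.
Import Order.TTheory GRing.Theory Num.Theory.
Import numFieldNormedType.Exports.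
Local Open Scope classical_set_scope.
Local Open Scope ring_scope.

Section metric_measure.
Context {R : realType} {T : Type}.
Variable dist : T -> T -> R.

Definition is_metric :=
  [/\ forall x y, 0 <= dist x y,
      forall x y, dist x y = 0 <-> x = y,
      forall x y, dist x y = dist y x &
      forall x y z, dist x z <= dist x y + dist y z].

Definition cball (x : T) (r : R) : set T := [set y | dist x y <= r].

Definition dopen (A : set T) :=
  forall x, A x -> exists2 e : R, 0 < e & forall y, dist x y < e -> A y.

Definition separable_metric :=
  exists D : set T, countable D /\
    forall x (e : R), 0 < e -> exists2 y, D y & dist x y < e.

Definition cauchy_seq (u : nat -> T) :=
  forall e : R, 0 < e -> exists N, forall n m, (N <= n)%N -> (N <= m)%N ->
    dist (u n) (u m) < e.

Definition converges_to (u : nat -> T) (l : T) :=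
  forall e : R, 0 < e -> exists N, forall n, (N <= n)%N -> dist (u n) l < e.

Definition locally_complete :=
  forall x, exists2 r : R, 0 < r & forall u : nat -> T,
    (forall n, cball x r (u n)) -> cauchy_seq u ->
    exists2 l, cball x r l & converges_to u l.

Definition positive_diameter := exists x y : T, 0 < dist x y.
End metric_measure.

(* measurability w.r.t. the completion of mu (sigma-algebra generated by
   A u N, A measurable, N mu-negligible), on the domain D *)
Definition completed_measurable_fun {d} {T : measurableType d} {R : realType}
  (mu : set T -> \bar R) (D : set T) (f : T -> \bar R) :=
  forall B : set (\bar R), measurable B ->
    (completed_algebra_gen mu).-sigma.-measurable (D `&` f @^-1` B).

(* Fix delta and r, and pick a dyadic scale b = rbar 2^-N <= r, so that
   vrho_delta is constant on every shell a_n < t <= 2 a_n, a_n = b 2^n.  By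
   Fubini, for a.e. x the x- and y-sections of the exceptional set in (ii)
   are null.  For such x, cut {y : d(x,y) > r} into the shells
   a_n < d(x,y) <= 2 a_n: on the n-th shell both rho_delta(x,y) and
   rho_delta(y,x) are at most vrho_delta(2 a_n) / m(B(x, 2 a_n)), because
   B(x, 2 a_n) lies in B(x, 4d) and in B(y, 4d), and the shell itself lies in
   B(x, 2 a_n); so the shell contributes at most 2 vrho_delta(2 a_n) / a_n^p.
   Conversely vrho_delta(2 a_n) / a_n^p is at most 2^(p+1) times the integral
   of vrho_delta(t) / t^(p+1) over the shell.  Only shells with a_n > r/2
   occur, so the essential supremum is at most 2^(p+2) times the integral
   over (r/2, +oo), and (i) concludes. *)

From HB Require Import structures.
From mathcomp Require Import all_boot all_order all_algebra.
From mathcomp Require Import all_classical all_reals all_analysis.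
From mathcomp Require Import measurable_realfun ess_sup_inf.
From mathcomp Require Import lra ring.
From Stdlib Require Cantor.
Set Implicit Arguments. Unset Strict Implicit. Unset Printing Implicit Defensive.
Import Order.TTheory GRing.Theory Num.Theory.
Import numFieldNormedType.Exports.
Local Open Scope classical_set_scope.
Local Open Scope ring_scope.

Section integral_nonmeasurable.
Context d (T : measurableType d) (R : realType) (mu : {measure set T -> \bar R}).
Local Open Scope ereal_scope.

Lemma ge0_le_integral_nonmeasurable (D : set T) (f g : T -> \bar R) :
  (forall x, D x -> 0 <= f x) -> (forall x, D x -> f x <= g x) ->
  \int[mu]_(x in D) f x <= \int[mu]_(x in D) g x.
Proof.
move=> f0 fg.
have g0 x : D x -> 0 <= g x by move=> Dx; exact: le_trans (f0 _ Dx) (fg _ Dx).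
rewrite (ge0_integralE _ f0) (ge0_integralE _ g0).
apply: ereal_sup_le => _ [h hf <-]; exists h => //= x.
apply: le_trans (hf x) _; rewrite /patch; case: ifPn => // /[!inE] Dx; exact: fg.
Qed.

Lemma ae_ge0_le_integral_nonmeasurable (D N : set T) (f g : T -> \bar R) :
  measurable D -> measurable N -> mu N = 0 -> measurable_fun D g ->
  (forall x, D x -> 0 <= f x) -> (forall x, D x -> 0 <= g x) ->
  (forall x, D x -> ~ N x -> f x <= g x) ->
  \int[mu]_(x in D) f x <= \int[mu]_(x in D) g x.
Proof.
move=> mD mN N0 mg f0 g0 fg.
(* Raising [g] to [+oo] on the null set [N] makes it dominate [f] on all of
   [D] without changing its integral. *)
pose g' x := g x + (\1_N x)%:E * +oo.
have g'0 x : D x -> 0 <= g' x by move=> Dx; rewrite adde_ge0 ?g0 ?mule_ge0.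
apply: (@le_trans _ _ (\int[mu]_(x in D) g' x)).
  apply: ge0_le_integral_nonmeasurable => // x Dx.
  have [Nx|Nx] := pselect (N x).
    rewrite /g' indicE mem_set// mul1e addey ?leey//.
    by rewrite gt_eqF// (lt_le_trans _ (g0 _ Dx)) ?ltNy0.
  by rewrite /g' indicE memNset// mul0e adde0; exact: fg.
rewrite le_eqVlt; apply/orP; left; apply/eqP.
apply: ge0_ae_eq_integral => //.
- apply: emeasurable_funD => //; apply: emeasurable_funM => //.
  by apply: measurableT_comp => //; exact: measurable_funS (measurable_indic mN).
- exists N; split => // x /= /not_implyP [Dx ne]; apply: contrapT => Nx; apply: ne.
  by rewrite /g' indicE memNset// mul0e adde0.
Qed.

End integral_nonmeasurable.

Section metric_measure_space.
Context (R : realType) d (X : measurableType d) (dist : X -> X -> R).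
Hypothesis dist_metric : is_metric dist.

Lemma cball_sub_cball4 (x y : X) (s : R) : s <= 2 * dist x y ->
  cball dist x s `<=` cball dist x (4 * dist x y) /\
  cball dist x s `<=` cball dist y (4 * dist x y).
Proof.
case: dist_metric => d0 _ dsym dtri sxy; have := d0 x y.
split=> z; rewrite /cball /= => xz; first lra.
by have := dtri y x z; rewrite (dsym y x); lra.
Qed.

Hypothesis measurable_dopen : @measurable _ X = <<s dopen dist >>.

Lemma measurable_cball (x : X) (r : R) : measurable (cball dist x r).
Proof.
case: dist_metric => _ _ dsym dtri.
rewrite -[cball _ _ _]setCK; apply: measurableC; rewrite measurable_dopen.
apply: sub_gen_smallest => y /= ny.
have ry : r < dist x y by rewrite ltNge; apply/negP => h; apply: ny.
exists (dist x y - r); first by rewrite subr_gt0.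
move=> z hz /= hxz; have := dtri x z y; rewrite (dsym z y).
rewrite /cball /= in hxz; lra.
Qed.

Lemma locally_finite_sigma_finite (m : {measure set X -> \bar R}) :
  separable_metric dist ->
  (forall x : X, exists2 r : R, 0 < r & (m (cball dist x r) < +oo)%E) ->
  sigma_finite setT m.
Proof.
case: dist_metric => _ _ dsym dtri [D [cD dD]] Hloc.
(* Balls of radius [1/(j+1)] around the points of a countable dense set,
   enumerated by Cantor pairing; those of finite measure cover [X]. *)
have [g gs] : exists g : nat -> X, set_surj setT D g by apply/pcard_surjP.
pose B n := cball dist (g (Cantor.of_nat n).1) ((Cantor.of_nat n).2.+1%:R^-1).
pose F n := if (m (B n) < +oo)%E then B n else set0.
exists F; last first.
  move=> n; rewrite /F; case: ifPn => h; split => //; first exact: measurable_cball.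
  by rewrite measure0.
apply/seteqP; split => // x _.
have [r r0 mr] := Hloc x.
pose j := Num.Def.truncn (2 / r).
have hj := truncnS_gt (2 / r); rewrite -/j in hj.
pose q : R := j.+1%:R^-1.
have q0 : 0 < q by rewrite invr_gt0.
have qr : q < r / 2.
  rewrite /q -(invrK (r / 2)) ltf_pV2 ?posrE ?invr_gt0 ?divr_gt0//.
  by rewrite invf_div.
have [y Dy dxy] := dD x q q0.
have [i _ gi] := gs y Dy.
exists (Cantor.to_nat (i, j)) => //.
have BE : B (Cantor.to_nat (i, j)) = cball dist y q.
  by rewrite /B Cantor.cancel_of_to /= gi.
have sub : cball dist y q `<=` cball dist x r.
  move=> z; rewrite /cball /= => hz; have := dtri x y z; lra.
rewrite /F BE ifT; first by rewrite /cball /= dsym; exact: ltW.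
apply: le_lt_trans mr; apply: le_measure => //; rewrite inE; exact: measurable_cball.
Qed.

End metric_measure_space.

Section negligible_sections.
Context (R : realType) d (X : measurableType d) (m : {measure set X -> \bar R}).
Hypothesis m_sigma_finite : sigma_finite setT m.
(* Fubini-Tonelli needs [m] packaged as a sigma-finite measure structure. *)
Let msf : set X -> \bar R := m.
HB.instance Definition _ := Measure.on msf.
HB.instance Definition _ := Measure_isSigmaFinite.Build _ _ _ msf m_sigma_finite.
Local Open Scope ereal_scope.

Lemma negligible_sections (A : set (X * X)) : measurable A -> (m \x m) A = 0 ->
  \forall x \ae m, m (xsection A x) = 0 /\ m (ysection A x) = 0.
Proof.
move=> mA A0.
have ae_eq0 (f : X -> \bar R) : measurable_fun setT f -> (forall x, 0 <= f x) ->
    \int[m]_x f x = 0 -> \forall x \ae m, f x = 0.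
  move=> mf f0 i0.
  have : \int[m]_(x in setT) `|f x| = 0.
    by rewrite -i0; apply: eq_integral => x _; rewrite gee0_abs.
  move/(ae_eq_integral_abs m measurableT mf) => [M [mM M0 sub]].
  by exists M; split => // x /= fx; apply: sub => /= /(_ I).
have xA0 := ae_eq0 _ (measurable_fun_xsection msf mA) (fun x => measure_ge0 _ _) A0.
have yA0 : \int[m]_x (m \o ysection A) x = 0.
  rewrite -(indic_fubini_tonelli_GE msf mA) -(indic_fubini_tonelli msf msf mA).
  by rewrite (indic_fubini_tonelli_FE msf mA).
have {}yA0 := ae_eq0 _ (measurable_fun_ysection msf mA) (fun x => measure_ge0 _ _) yA0.
by apply: filterS2 xA0 yA0 => x; split.
Qed.

End negligible_sections.

Lemma exists_dyadic_shell (R : realType) (b t : R) : 0 < b -> b < t ->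
  exists n : nat, b * 2 ^+ n < t <= b * 2 ^+ n * 2.
Proof.
move=> b0 bt.
have [n tn n_min] : exists2 n, t <= b * 2 ^+ n * 2 &
    forall k, t <= b * 2 ^+ k * 2 -> (n <= k)%N.
  have ex : exists n, t <= b * 2 ^+ n * 2.
    exists (Num.Def.truncn (t / b)); rewrite -mulrA -exprSr -ler_pdivrMl// mulrC.
    apply/ltW/(lt_le_trans (truncnS_gt _)).
    by rewrite -natrX ler_nat ltnW// ltn_expl.
  by case: (ex_minnP ex) => n; exists n.
exists n; rewrite tn andbT; case: n tn n_min => [|n] tn n_min.
  by rewrite expr0 mulr1.
by rewrite exprSr mulrA ltNge; apply/negP => /n_min; rewrite ltnn.
Qed.

Lemma dyadic_shell_disjoint (R : realType) (b s : R) (i k : nat) : 0 < b ->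
  b * 2 ^+ i < s <= b * 2 ^+ i * 2 -> b * 2 ^+ k < s <= b * 2 ^+ k * 2 -> i = k.
Proof.
move=> b0 /andP[si1 si2] /andP[sk1 sk2].
have shell_le j l : (j < l)%N -> b * 2 ^+ j * 2 <= b * 2 ^+ l.
  by move=> jl; rewrite -mulrA -exprSr ler_pM2l// ler_eXn2l// ltr1n.
case: (ltngtP i k) => // ik.
- by have := lt_le_trans sk1 (le_trans si2 (shell_le _ _ ik)); rewrite ltxx.
- by have := lt_le_trans si1 (le_trans sk2 (shell_le _ _ ik)); rewrite ltxx.
Qed.

Lemma dyadic_scale_below (R : realType) (c : R -> \bar R) (rbar r : R) :
  0 < rbar -> 0 < r ->
  (forall (k : int) (t s : R),
     (2 ^ k) * rbar < t <= (2 ^ (k + 1)) * rbar ->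
     (2 ^ k) * rbar < s <= (2 ^ (k + 1)) * rbar -> c t = c s) ->
  exists b, [/\ 0 < b, b <= r & forall (n : nat) t,
    b * 2 ^+ n < t <= b * 2 ^+ n * 2 -> c t = c (b * 2 ^+ n * 2)].
Proof.
move=> rbar0 r0 c_const.
pose N := Num.Def.truncn (rbar / r).
have bN : rbar / 2 ^+ N <= r.
  have := truncnS_gt (rbar / r); rewrite -/N ler_pdivrMr ?exprn_gt0// ltr_pdivrMr// => h.
  apply/ltW/(lt_le_trans h); rewrite mulrC ler_pM2l// -natrX ler_nat; exact: ltn_expl.
exists (rbar / 2 ^+ N); split => //; first by rewrite divr_gt0// exprn_gt0.
move=> n t ht.
have E1 : (2 : R) ^ (n%:Z - N%:Z) * rbar = rbar / 2 ^+ N * 2 ^+ n.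
  by rewrite expfzDr ?pnatr_eq0// -exprnN -exprnP; ring.
have E2 : (2 : R) ^ (n%:Z - N%:Z + 1) * rbar = rbar / 2 ^+ N * 2 ^+ n * 2.
  by rewrite expfzDr ?pnatr_eq0// expr1z mulrAC E1.
apply: (c_const (n%:Z - N%:Z)); rewrite E1 E2 // lexx andbT.
rewrite ltr_pMr ?ltr1n// mulr_gt0 ?exprn_gt0// divr_gt0// exprn_gt0.
Qed.

(* Discretisation of [\int_(q, +oo) c t / t^(p+1) dt] along the dyadic shells
   [(a_n, 2 a_n]], [a_n = b 2^n]. *)
Definition shell_term (R : realType) (c : R -> \bar R) (p b q : R) (n : nat)
    : \bar R :=
  if q < b * 2 ^+ n then (c (b * 2 ^+ n * 2)%R * ((b * 2 ^+ n) `^ p)^-1%R%:E)%E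
  else 0%E.

Lemma shell_term_ge0 (R : realType) (c : R -> \bar R) (p b q : R) (n : nat) :
  (forall t, 0 < t -> (0 <= c t)%E) -> 0 < b -> (0 <= shell_term c p b q n)%E.
Proof.
move=> c0 b0; rewrite /shell_term; case: ifPn => // _.
by rewrite mule_ge0 ?c0 ?lee_fin ?invr_ge0 ?powR_ge0// !mulr_gt0// exprn_gt0.
Qed.

Lemma mulVe_le1 (R : realType) (u v : \bar R) : (0 <= u -> u <= v -> v^-1 * u <= 1)%E.
Proof.
move=> u0 uv; case: v uv => [v| |] uv; last by move: (le_trans u0 uv).
- case: u u0 uv => [u| |] u0 uv //; rewrite !lee_fin in u0 uv.
  rewrite inver; case: eqP => [v0|/eqP v0].
    by move: uv; rewrite v0 => u_le0; rewrite (@le_anti _ _ u 0) ?u_le0 ?mule0.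
  by rewrite -EFinM lee_fin ler_pdivrMl ?mulr1// lt_neqAle eq_sym v0 (le_trans u0 uv).
- by rewrite /= mul0e.
Qed.

Section tail_integral_shells.
Context (R : realType) d (X : measurableType d) (dist : X -> X -> R)
  (m : {measure set X -> \bar R}).
Hypotheses (dist_metric : is_metric dist)
  (mB : forall x r, measurable (cball dist x r)).
Variables (Omega : set X) (p : R) (rh : X -> X -> \bar R) (c : R -> \bar R)
  (b : R).
Hypotheses (mO : measurable Omega) (p0 : 0 < p) (rh0 : forall x y, (0 <= rh x y)%E)
  (c0 : forall t, 0 < t -> (0 <= c t)%E) (b0 : 0 < b).
Let a n := b * 2 ^+ n.
Hypothesis c_shell : forall n t, a n < t <= a n * 2 -> c t = c (a n * 2).
Variables (x : X) (r : R) (N : set X).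
Hypotheses (r0 : 0 < r) (br : b <= r) (mN : measurable N) (N0 : m N = 0%E).
Hypothesis rh_le : forall y, Omega y -> x <> y -> ~ N y ->
  (rh x y <= c (dist x y) / m (cball dist x (4 * dist x y)))%E /\
  (rh y x <= c (dist y x) / m (cball dist y (4 * dist y x)))%E.

Local Open Scope ereal_scope.

(* [G] is a measurable majorant of the integrand, which need not be measurable,
   built shell by shell. *)
Let t := shell_term c p b (r / 2).
Let shell n := [set y | (a n < dist x y <= a n * 2)%R].
Let ball n := cball dist x (a n * 2).
Let e n := 2%:E * (t n * (m (ball n))^-1).
Let term n y := (\1_(shell n) y)%:E * e n.
Let G y := \sum_(0 <= n <oo) term n y.

Let a_gt0 n : (0 < a n)%R. Proof. by rewrite mulr_gt0// exprn_gt0. Qed.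

Let measurable_shell n : measurable (shell n).
Proof.
have -> : shell n = ball n `\` cball dist x (a n).
  apply/seteqP; split => y; rewrite /shell /ball /cball /=.
    by move=> /andP[h1 h2]; split => //; apply/negP; rewrite -ltNge.
  by move=> [h1 /negP]; rewrite -ltNge => h2; apply/andP.
by apply: measurableD; apply: mB.
Qed.

Let t_ge0 n : 0 <= t n. Proof. exact: shell_term_ge0. Qed.

Let e_ge0 n : 0 <= e n. Proof. by rewrite !mule_ge0 ?inve_ge0. Qed.

Let term_ge0 n y : 0 <= term n y.
Proof. by rewrite mule_ge0 ?lee_fin. Qed.

Let measurable_term n : measurable_fun setT (term n).
Proof. exact/emeasurable_funM/measurable_cst/measurableT_comp. Qed.

Let G_ge0 y : 0 <= G y.
Proof. by apply: nneseries_ge0 => n _ _; exact: term_ge0. Qed.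

Let term_le_G n y : term n y <= G y.
Proof.
apply: le_trans (nneseries_lim_ge n.+1 (fun i _ _ => term_ge0 i y)).
by rewrite big_nat_recr //= leeDr// sume_ge0.
Qed.

Let integral_G_le : \int[m]_y G y <= 2%:E * \sum_(0 <= n <oo) t n.
Proof.
rewrite (integral_nneseries _ measurableT measurable_term (fun n y _ => term_ge0 n y)).
rewrite -nneseriesZl; last by move=> n _; exact: t_ge0.
apply: lee_nneseries => [n _ _|n _]; first exact: integral_ge0.
rewrite /term ge0_integralZr ?e_ge0//; last exact/measurableT_comp/measurable_indic.
rewrite integral_indic // setIT /e muleCA; apply: lee_wpmul2l => //.
rewrite muleC -muleA; apply: le_trans (lee_wpmul2l (t_ge0 n) _) _.
  apply: mulVe_le1 => //; apply: le_measure; rewrite ?inE.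
  - exact: measurable_shell.
  - exact: mB.
  - by move=> y /andP[].
by rewrite mule1.
Qed.

(* Both kernel bounds pass to the ball [B(x, 2 a_n)], which sits inside
   [B(x, 4 d)] and [B(y, 4 d)] when [a_n < d <= 2 a_n]. *)
Let rh_le_shell n y : Omega y -> ~ N y -> shell n y ->
  rh x y <= c (a n * 2)%R * (m (ball n))^-1 /\
  rh y x <= c (a n * 2)%R * (m (ball n))^-1.
Proof.
case: (dist_metric) => d0 d1 dsym _ Oy Ny /[dup] /andP[s1 s2] sn.
have xy : x <> y by move=> xy; move: s1; rewrite xy (d1 y y).2// ltNge ltW.
have [subx suby] : ball n `<=` cball dist x (4 * dist x y) /\
                   ball n `<=` cball dist y (4 * dist x y).
  by apply: cball_sub_cball4 => //; lra.
have [rxy ryx] := rh_le Oy xy Ny; rewrite (dsym y x) (c_shell sn) in ryx.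
rewrite (c_shell sn) in rxy.
have c2 : 0 <= c (a n * 2)%R by rewrite c0// mulr_gt0.
have ball_le B : measurable B -> ball n `<=` B ->
    c (a n * 2)%R / m B <= c (a n * 2)%R * (m (ball n))^-1.
  move=> mB' sub; apply: lee_wpmul2l => //.
  rewrite lee_pV2 ?inE ?measure_ge0//=.
  by apply: le_measure => //; rewrite inE //; exact: mB.
by split; [apply: le_trans rxy (ball_le _ _ subx)|
           apply: le_trans ryx (ball_le _ _ suby)].
Qed.

Let integrand_le_G y : Omega y -> (r < dist x y)%R -> ~ N y ->
  (rh x y + rh y x) / ((dist x y `^ p)%:E) <= G y.
Proof.
move=> Oy ry Ny.
have dxy0 : (0 < dist x y)%R by exact: lt_trans r0 ry.
have [n sn] := exists_dyadic_shell b0 (le_lt_trans br ry).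
have [rxy ryx] := rh_le_shell Oy Ny sn.
case/andP: sn => s1 s2.
have tE : t n = c (a n * 2)%R * ((a n `^ p)^-1)%R%:E.
  by rewrite /t /shell_term ifT//; lra.
have dist_p : ((dist x y `^ p)%:E)^-1 <= ((a n `^ p)^-1)%R%:E.
  rewrite inver gt_eqF ?powR_gt0// lee_fin lef_pV2 ?posrE ?powR_gt0//.
  by rewrite ge0_ler_powR ?nnegrE// ?ltW.
apply: le_trans (term_le_G n y).
rewrite /term indicE mem_set /=; last exact/andP.
rewrite mul1e /e tE.
apply: le_trans (lee_pmul _ _ (leeD rxy ryx) dist_p) _.
- exact: adde_ge0.
- by rewrite inve_ge0 lee_fin powR_ge0.
have twice (u : \bar R) : u + u = 2%:E * u.
  by rewrite (_ : 2%:E = 1 + 1) ?ge0_muleDl ?mul1e// -EFinD.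
rewrite twice -muleA; apply: lee_wpmul2l => //.
by rewrite muleAC.
Qed.

Lemma tail_integral_le_shell_sum :
  \int[m]_(y in Omega `&` [set y | (r < dist x y)%R])
    ((rh x y + rh y x) / ((dist x y `^ p)%:E))
  <= 2%:E * \sum_(0 <= n <oo) shell_term c p b (r / 2) n.
Proof.
have mD : measurable (Omega `&` [set y | (r < dist x y)%R]).
  apply: measurableI => //.
  have -> : [set y | (r < dist x y)%R] = ~` cball dist x r.
    by apply/seteqP; split => y; rewrite /cball /= ltNge => /negP.
  exact/measurableC/mB.
have mG : measurable_fun setT G.
  by apply: (ge0_emeasurable_sum (P := xpredT)) => // k _; exact: measurable_term.
apply: le_trans integral_G_le.
apply: le_trans
  (ge0_subset_integral _ mD measurableT mG (fun y _ => G_ge0 y) (subsetT _)).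
apply: (@ae_ge0_le_integral_nonmeasurable _ _ _ m _ N) => //.
- exact: measurable_funS mG.
- move=> y _; rewrite mule_ge0 ?adde_ge0//.
  by rewrite inve_ge0 lee_fin powR_ge0.
- by move=> y [Oy ry] Ny; apply: integrand_le_G.
Qed.

End tail_integral_shells.

Section shell_sum_integral.
Context (R : realType) (p : R) (c : R -> \bar R) (b q : R).
Hypotheses (p0 : 0 < p) (c0 : forall t, 0 < t -> (0 <= c t)%E) (b0 : 0 < b)
  (q0 : 0 < q).
Let a n := b * 2 ^+ n.
Hypothesis c_shell : forall n t, a n < t <= a n * 2 -> c t = c (a n * 2).

Local Open Scope ereal_scope.

Let t := shell_term c p b q.
Let C : R := 2 `^ (p + 1).
Let shell n : set R := `]a n, (a n * 2)%R]%classic.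
Let g n s := (\1_(shell n) s)%:E * (t n * ((C^-1 * (a n)^-1)%R)%:E).
Let h s := c s / ((s `^ (p + 1))%:E).

Let a_gt0 n : (0 < a n)%R. Proof. by rewrite mulr_gt0// exprn_gt0. Qed.

Let C_gt0 : (0 < C)%R. Proof. exact: powR_gt0. Qed.

Let g_ge0 n s : 0 <= g n s.
Proof.
rewrite !mule_ge0 ?lee_fin ?shell_term_ge0//.
by rewrite mulr_ge0 ?invr_ge0 ?ltW.
Qed.

(* The [n]-th shell has length [a_n], which cancels the factor [a_n^-1]. *)
Let integral_g n : C%:E * \int[lebesgue_measure]_(s in `]q, +oo[) g n s = t n.
Proof.
have w0 : 0 <= t n * ((C^-1 * (a n)^-1)%R)%:E.
  by rewrite mule_ge0 ?shell_term_ge0// lee_fin mulr_ge0 ?invr_ge0 ?ltW.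
rewrite /g ge0_integralZr//; last first.
  apply: (measurable_funS measurableT) => //; apply: measurableT_comp => //.
  by apply: measurable_indic; exact: measurable_itv.
rewrite integral_indic//; last exact: measurable_itv.
rewrite /t /shell_term; case: ifPn => qa; last by rewrite mul0e !mule0.
have -> : shell n `&` `]q, +oo[ = shell n.
  apply/setIidl => s; rewrite /shell /= !in_itv /= andbT => /andP[h1 _].
  exact: lt_trans qa h1.
have shell_length : lebesgue_measure (shell n) = (a n)%:E.
  rewrite /shell lebesgue_measure_itv /= lte_fin ltr_pMr ?a_gt0 ?ltr1n//.
  by rewrite -EFinB; congr EFin; ring.
rewrite [X in C%:E * (X * _)](_ : _ = (a n)%:E); last exact: shell_length.
rewrite (muleCA (a n)%:E) (muleCA C%:E) -!EFinM.
have -> : (C * (a n * (C^-1 / a n)) = 1)%R by field; rewrite !gt_eqF.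
by rewrite mule1.
Qed.

Let h_ge0 s : (q < s)%R -> 0 <= h s.
Proof.
move=> qs; rewrite mule_ge0 ?inve_ge0 ?lee_fin ?powR_ge0//.
exact/c0/(lt_trans q0 qs).
Qed.

(* On its shell [c] is the constant [c (2 a_k)], and [s^(p+1) <= (2 a_k)^(p+1)
   = C a_k^p a_k]. *)
Let g_le_h k s : (q < s)%R -> shell k s -> g k s <= h s.
Proof.
move=> qs sk; rewrite /g indicE mem_set // mul1e /t /shell_term.
case: ifPn => qa; last by rewrite mul0e; exact: h_ge0.
move: (sk); rewrite /shell /= in_itv /= => /andP[s1 s2].
have ak := a_gt0 k.
have s0 : (0 < s)%R := lt_trans ak s1.
rewrite /h (c_shell (n := k) (t := s)); last exact/andP.
rewrite -muleA -EFinM inver gt_eqF ?powR_gt0//.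
apply: lee_wpmul2l; first by rewrite c0// mulr_gt0.
have apk : (0 < a k `^ p)%R by rewrite powR_gt0.
rewrite lee_fin (_ : (((b * 2 ^+ k) `^ p)^-1 * (C^-1 / a k) =
                      (a k `^ p * C * a k)^-1)%R); last by field; rewrite !gt_eqF.
rewrite lef_pV2 ?posrE ?powR_gt0 ?mulr_gt0//.
have -> : (a k `^ p * C * a k = (a k * 2) `^ (p + 1))%R.
  rewrite powRM ?(ltW ak)// powRD; last by apply/implyP => _; rewrite gt_eqF.
  by rewrite powRr1 ?(ltW ak)// /C; ring.
apply: ge0_ler_powR; rewrite ?nnegrE.
- by rewrite addr_ge0// ltW.
- exact: ltW.
- by rewrite ltW// mulr_gt0.
- exact: s2.
Qed.

Lemma shell_sum_le_integral : \sum_(0 <= n <oo) shell_term c p b q n <=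
  (2 `^ (p + 1))%:E *
  \int[lebesgue_measure]_(s in `]q, +oo[) (c s / ((s `^ (p + 1))%:E)).
Proof.
apply: lime_le; first by apply: is_cvg_nneseries => *; exact: shell_term_ge0.
apply: nearW => K; rewrite -/t.
under eq_bigr do rewrite -integral_g.
rewrite -ge0_sume_distrr; last by move=> i _; apply: integral_ge0 => s _.
apply: lee_wpmul2l; first by rewrite lee_fin ltW.
rewrite -ge0_integral_sum//; last first.
  move=> n; apply: emeasurable_funM => //; apply/measurable_EFinP.
  by apply: measurable_indic; exact: measurable_itv.
apply: ge0_le_integral_nonmeasurable => [s _|s]; first exact: sume_ge0.
rewrite /= in_itv /= andbT => qs.
have [[k [kK sk]]|none] := pselect (exists k, (k < K)%N /\ shell k s).
- rewrite (bigD1_seq k) /= ?mem_index_iota ?iota_uniq//.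
  rewrite big1_seq ?adde0; first exact: g_le_h.
  move=> i /andP[ik _]; rewrite /g indicE memNset ?mul0e // => si.
  by move: ik; rewrite (dyadic_shell_disjoint b0 si sk) eqxx.
- rewrite big1_seq; first exact: h_ge0.
  move=> i /andP[_]; rewrite mem_index_iota => /andP[_ iK].
  by rewrite /g indicE memNset ?mul0e // => si; apply: none; exists i.
Qed.

End shell_sum_integral.

Section limits_at_right.
Context (R : realType).
Local Open Scope ereal_scope.

Lemma le_limf_esupZ (F : set_system R) {FF : Filter F} (f g : R -> \bar R)
    (K : R) : (0 < K)%R -> (\forall x \near F, f x <= K%:E * g x) ->
  limf_esup f F <= K%:E * limf_esup g F.
Proof.
move=> K0 Ffg; rewrite !limf_esupE -ereal_inf_pZl //.
apply/ereal_infP => _ [_ [V FV <-] <-].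
apply: (@le_trans _ _ (ereal_sup (f @` (V `&` [set x | f x <= K%:E * g x])))).
  apply: ereal_inf_lbound; exists (V `&` [set x | f x <= K%:E * g x]) => //.
  exact: filterI.
rewrite -ereal_sup_pZl //; apply/ereal_supP => _ [x [Vx fgx] <-].
apply: (le_trans fgx); apply: ereal_sup_ubound.
by exists (g x) => //; exists x.
Qed.

Lemma limf_esup_ge0_near (F : set_system R) {FF : ProperFilter F}
    (f : R -> \bar R) :
  (\forall x \near F, 0 <= f x) -> 0 <= limf_esup f F.
Proof.
move=> Ff0; rewrite limf_esupE; apply/ereal_infP => _ [V FV <-].
have [x [Vx f0x]] := filter_ex (filterI FV Ff0).
by apply: le_trans f0x _; apply: ereal_sup_ubound; exists x.
Qed.

Lemma cvg_at_right0_half {T : topologicalType} (f : R -> T) (l : T) :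
  f r @[r --> 0%R^'+] --> l -> f (r / 2)%R @[r --> 0%R^'+] --> l.
Proof.
move=> fl U /fl /nbhs_ballP [e e0 H]; apply/nbhs_ballP; exists e => // r hr r0.
apply: H; last by rewrite divr_gt0.
move: hr; rewrite /ball /= !sub0r !normrN => hr.
rewrite gtr0_norm ?divr_gt0 //; rewrite gtr0_norm // in hr; lra.
Qed.

Lemma near_right0_lt1 : \forall x \near (0 : R)^'+, (0 < x < 1)%R.
Proof.
near=> x; apply/andP; split; near: x; [exact: nbhs_right_gt|exact: nbhs_right_lt].
Unshelve. all: by end_near.
Qed.

End limits_at_right.

Definition decay_tail (R : realType) d (X : measurableType d)
    (dist : X -> X -> R) (m : {measure set X -> \bar R}) (Omega : set X)
    (p : R) (rh : X -> X -> \bar R) (r : R) (x : X) : \bar R :=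
  if x \in Omega then
    (\int[m]_(y in Omega `&` [set y | (r < dist x y)%R])
      ((rh x y + rh y x) / ((dist x y `^ p)%:E)))%E
  else 0%E.

Section ess_sup_tail.
Context (R : realType) d (X : measurableType d) (dist : X -> X -> R)
  (m : {measure set X -> \bar R}).
Hypotheses (dist_metric : is_metric dist)
  (mB : forall x r, measurable (cball dist x r))
  (m_sigma_finite : sigma_finite setT m).
Variables (Omega : set X) (p : R) (rh : X -> X -> \bar R) (c : R -> \bar R)
  (b : R).
Hypotheses (mO : measurable Omega) (p0 : 0 < p) (rh0 : forall x y, (0 <= rh x y)%E)
  (c0 : forall t, 0 < t -> (0 <= c t)%E) (b0 : 0 < b)
  (c_shell : forall n t, b * 2 ^+ n < t <= b * 2 ^+ n * 2 ->
    c t = c (b * 2 ^+ n * 2)).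
Hypothesis rh_le : (m \x m)%E.-negligible [set z : X * X |
  [/\ Omega z.1, Omega z.2, z.1 <> z.2 &
      ~ (rh z.1 z.2 <= c (dist z.1 z.2) / m (cball dist z.1 (4 * dist z.1 z.2)))%E]].

Local Open Scope ereal_scope.

Lemma ess_sup_tail_ge0 (r : R) :
  0 < m setT -> 0 <= ess_sup m (decay_tail dist m Omega p rh r).
Proof.
move=> mT; apply: ess_sup_gee => //; apply: nearW => x; rewrite /decay_tail.
case: ifPn => // _; apply: integral_ge0 => y _.
by rewrite mule_ge0 ?adde_ge0 ?inve_ge0 ?lee_fin ?powR_ge0.
Qed.

Lemma ess_sup_tail_le (r : R) : (0 < r)%R -> (b <= r)%R ->
  ess_sup m (decay_tail dist m Omega p rh r) <= (2 * 2 `^ (p + 1))%R%:E *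
    \int[lebesgue_measure]_(t in `](r / 2)%R, +oo[) (c t / ((t `^ (p + 1))%:E)).
Proof.
move=> r0 br; have [A [mA A0 exceptional]] := rh_le.
apply/ess_supP; apply: filterS (negligible_sections m_sigma_finite mA A0).
move=> x [xA0 yA0]; rewrite /decay_tail; case: ifPn => [/[!inE] Ox|_]; last first.
  rewrite mule_ge0 ?lee_fin ?mulr_ge0 ?powR_ge0//.
  apply: integral_ge0 => t; rewrite /= in_itv /= andbT => ht.
  by rewrite mule_ge0 ?inve_ge0 ?lee_fin ?powR_ge0 ?c0// (lt_trans _ ht)// divr_gt0.
pose Nx := xsection A x `|` ysection A x.
have mNx : measurable Nx.
  exact: measurableU (measurable_xsection _ _) (measurable_ysection _ _).
have Nx0 : m Nx = 0.
  apply/eqP; rewrite eq_le measure_ge0 andbT.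
  apply: le_trans
    (measureU2 m (measurable_xsection x mA) (measurable_ysection x mA)) _.
  rewrite [X in X + _](_ : _ = 0) ?[X in _ + X](_ : _ = 0) ?adde0//.
have rh_le_x y : Omega y -> x <> y -> ~ Nx y ->
    rh x y <= c (dist x y) / m (cball dist x (4 * dist x y)) /\
    rh y x <= c (dist y x) / m (cball dist y (4 * dist y x)).
  move=> Oy xy Ny; split; apply: contrapT => le_xy; apply: Ny.
    by left; rewrite /xsection /= inE; apply: exceptional.
  right; rewrite /ysection /= inE; apply: exceptional.
  by split => //= yx; apply: xy.
apply: (le_trans (tail_integral_le_shell_sum dist_metric mB mO p0 rh0 c0 b0
  c_shell r0 br mNx Nx0 rh_le_x)).
rewrite EFinM -muleA lee_wpmul2l//.
exact: shell_sum_le_integral p0 c0 b0 (divr_gt0 r0 _) c_shell.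
Qed.

End ess_sup_tail.

Theorem proposition3p14 (R : realType) (dX : measure_display)
  (X : measurableType dX) (dist : X -> X -> R)
  (m : {measure set X -> \bar R})
  (* standing assumptions on (X, dist, m) *)
  (Hmetric : is_metric dist)
  (Hsep : separable_metric dist)
  (Hlc : locally_complete dist)
  (Hdiam : positive_diameter dist)
  (Hborel : @measurable _ X = <<s dopen dist >>)
  (Hlocfin : forall x : X, exists2 r : R, 0 < r & (m (cball dist x r) < +oo)%E)
  (HmX : (0 < m setT)%E)
  (* data *)
  (Omega : set X) (HOmega : dopen dist Omega)
  (p : R) (Hp : 1 <= p)
  (rho : R -> X -> X -> \bar R)
  (Hrho_ge0 : forall delta, 0 < delta < 1 -> forall x y, (0 <= rho delta x y)%E)
  (Hrho_meas : forall delta, 0 < delta < 1 ->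
     completed_measurable_fun (m \x m)%E setT (fun z => rho delta z.1 z.2))
  (vrho : R -> R -> \bar R)
  (Hvrho_ge0 : forall delta, 0 < delta < 1 -> forall t, 0 < t -> (0 <= vrho delta t)%E)
  (Hvrho_meas : forall delta, 0 < delta < 1 ->
     completed_measurable_fun lebesgue_measure `]0, +oo[ (vrho delta))
  (Hi : (fun r => limf_esup
          (fun delta => \int[lebesgue_measure]_(t in `]r, +oo[)
                           (vrho delta t / ((t `^ (p + 1))%:E)))%E
          (0%R^'+)) @ 0%R^'+ --> 0%E)
  (Hii : forall delta, 0 < delta < 1 ->
     (m \x m)%E.-negligible
       [set z : X * X | [/\ Omega z.1, Omega z.2, z.1 <> z.2 &
          ~ (rho delta z.1 z.2 <=
               vrho delta (dist z.1 z.2) / m (cball dist z.1 (4 * dist z.1 z.2)))%E]])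
  (Hiii : exists2 rbar : R, 0 < rbar & forall delta, 0 < delta < 1 ->
     forall (k : int) (t s : R),
       (2 ^ k) * rbar < t <= (2 ^ (k + 1)) * rbar ->
       (2 ^ k) * rbar < s <= (2 ^ (k + 1)) * rbar ->
       vrho delta t = vrho delta s) :
  (fun r : R => limf_esup
     (fun delta : R => ess_sup m (fun x =>
        if x \in Omega then
          (\int[m]_(y in Omega `&` [set y | (r < dist x y)%R])
             ((rho delta x y + rho delta y x) / ((dist x y `^ p)%:E)))%E
        else 0%E))
     (0%R^'+)) @ 0%R^'+ --> 0%E.
Proof.
have mB := measurable_cball Hmetric Hborel.
have msf := locally_finite_sigma_finite Hmetric Hborel Hsep Hlocfin.
have mO : measurable Omega by rewrite Hborel; exact: sub_gen_smallest.
have p0 : 0 < p := lt_le_trans ltr01 Hp.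
have [rbar rbar0 vrho_const] := Hiii.
pose K := 2 * 2 `^ (p + 1).
pose tail_bound (r : R) := (K%:E * limf_esup (fun delta =>
  \int[lebesgue_measure]_(t in `](r / 2)%R, +oo[)
    (vrho delta t / ((t `^ (p + 1))%:E))) 0%R^'+)%E.
have delta01 := near_right0_lt1 R.
apply: (@squeeze_cvge R 0%R^'+ _ R (cst 0%E) _ tail_bound _ 0%E (cvg_cst _)).
- near=> r; apply/andP; split.
    apply: limf_esup_ge0_near; apply: filterS delta01 => delta hd /=.
    exact: (@ess_sup_tail_ge0 _ _ _ dist m Omega p (rho delta)
      (Hrho_ge0 delta hd) r HmX).
  apply: le_limf_esupZ; first by rewrite mulr_gt0// powR_gt0.
  apply: filterS delta01 => delta hd.
  have r0 : 0 < r by near: r; exact: nbhs_right_gt.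
  have [b [b0 br c_shell]] := dyadic_scale_below rbar0 r0 (vrho_const delta hd).
  exact: (ess_sup_tail_le Hmetric mB msf mO p0 (Hrho_ge0 delta hd)
    (Hvrho_ge0 delta hd) b0 c_shell (Hii delta hd) r0 br).
- have := cvgeZl (fin_numE K%:E) (cvg_at_right0_half Hi).
  by rewrite mule0.
Unshelve. all: by end_near.
Qed.
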